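(* For all positive integers $n,d$, $k(n+d)\le k(n)+\left\lceil \dfrac{d}{\lfloor\sqrt{n}\rfloor}\right\rceil$.
   Context: A system on $n$ elements is a triple $(\mathcal{F},w,s)$ where $\mathcal{F}=(F_1,\dots,F_m)$ is a collection of subsets of $[n]$, $w\in[0,1]^m$ with $\sum_i w_i=1$, and $s\in[0,1]^{m\times m\times n}$ with $\sum_p s_{ijp}=1$ for all $i,j$. It is intersecting if $s_{ijp}>0$ implies $p\in F_i\cap F_j$. It is balanced if for all $p\in[n]$, $\sum_{i,j} w_iw_js_{ijp}=1/n$. Its cardinality is the size of the largest set in $\mathcal{F}$. $k(n)$ is the minimum $k$ such that there exists a balanced intersecting system on $n$ elements with cardinality $k$. *)

From HB Require Import structures.
From mathcomp Require Import all_boot all_order all_algebra.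
From mathcomp Require Import boolp Rstruct.
From Stdlib Require Rdefinitions.
Notation R := Rdefinitions.R.
Set Implicit Arguments. Unset Strict Implicit. Unset Printing Implicit Defensive.
Import Order.TTheory GRing.Theory Num.Theory.
Local Open Scope ring_scope.

(* The ground set [n] is represented by 'I_n, the collection F = (F_1..F_m)
   by a function 'I_m -> {set 'I_n}. *)

Definition is_system (n m : nat) (F : 'I_m -> {set 'I_n}) (w : 'I_m -> R)
    (s : 'I_m -> 'I_m -> 'I_n -> R) : Prop :=
  [/\ (forall i, 0 <= w i <= 1),
      \sum_(i < m) w i = 1,
      (forall i j p, 0 <= s i j p <= 1) &
      (forall i j, \sum_(p < n) s i j p = 1)].

Definition is_intersecting (n m : nat) (F : 'I_m -> {set 'I_n})
    (s : 'I_m -> 'I_m -> 'I_n -> R) : Prop :=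
  forall i j p, 0 < s i j p -> p \in F i :&: F j.

Definition is_balanced (n m : nat) (w : 'I_m -> R)
    (s : 'I_m -> 'I_m -> 'I_n -> R) : Prop :=
  forall p : 'I_n, \sum_(i < m) \sum_(j < m) w i * w j * s i j p = (n%:R)^-1.

Definition cardinality (n m : nat) (F : 'I_m -> {set 'I_n}) : nat :=
  \max_(i < m) #|F i|.

Definition achievable (n k : nat) : Prop :=
  exists m (F : 'I_m -> {set 'I_n}) w s,
    [/\ is_system F w s, is_intersecting F s, is_balanced w s
      & cardinality F = k].

Lemma achievable_ex (n : nat) : exists k, `[< achievable n.+1 k >].
Proof.
exists n.+1; apply/asboolP.
exists 1%N, (fun _ => setT), (fun _ => 1), (fun _ _ _ => (n.+1%:R)^-1).
have n0 : (n.+1%:R : R) != 0 by rewrite pnatr_eq0.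
split.
- split.
  + by move=> i; rewrite lexx ler01.
  + by rewrite big_ord1.
  + move=> i j p; rewrite invr_ge0 ler0n /= invf_le1 ?ltr0Sn //.
    by rewrite ler1n.
  + move=> i j; by rewrite sumr_const card_ord -[RHS](mulVf n0) mulr_natr.
- by move=> i j p _; rewrite inE /= !inE.
- by move=> p; rewrite !big_ord1 !mul1r.
- by rewrite /cardinality big_ord1 cardsT card_ord.
Qed.

(* k(n) = minimum cardinality of a balanced intersecting system on n elements
   (for n = 0 there is no system at all; we set k(0) = 0, unused below). *)
Definition kmin (n : nat) : nat :=
  match n with
  | 0 => 0
  | n'.+1 => ex_minn (achievable_ex n')
  end.

Definition isqrt (n : nat) : nat := Nat.sqrt n.
Definition ceil_div (a b : nat) : nat := (a + b.-1) %/ b.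

(* Given a balanced intersecting system on n points and 0 < d with d^2 <= n + d,
   replace each set F_i by d copies F_i + {n + q} (q < d) of weight w_i / d.
   A pair of equal-index copies (i, q), (j, q) sends mass a = d^2 / (n + d) to
   the new point n + q and spreads the rest 1 - a over F_i /\ F_j as before;
   other pairs keep their old distribution.  Every old point then receives
   (1/n) (1 - a/d) = 1/(n + d), every new point a/d^2 = 1/(n + d), and the
   cardinality grows by one.  Adding d points in steps of size floor(sqrt n),
   which only increases along the way, costs ceil(d / floor(sqrt n)). *)
From Stdlib Require PeanoNat.
From mathcomp Require Import all_boot all_order all_algebra.
From mathcomp Require Import boolp Rstruct.
From mathcomp Require Import ring lra zify.
Set Implicit Arguments. Unset Strict Implicit. Unset Printing Implicit Defensive.
Import Order.TTheory GRing.Theory Num.Theory.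
Local Open Scope ring_scope.

Lemma achievable_finType (N k : nat) (T : finType) (F : T -> {set 'I_N})
    (w : T -> R) (s : T -> T -> 'I_N -> R) :
  (forall t, 0 <= w t <= 1) -> \sum_t w t = 1 ->
  (forall t u p, 0 <= s t u p <= 1) -> (forall t u, \sum_(p < N) s t u p = 1) ->
  (forall t u p, 0 < s t u p -> p \in F t :&: F u) ->
  (forall p, \sum_t \sum_u w t * w u * s t u p = N%:R^-1) ->
  (\max_t #|F t| = k)%N ->
  achievable N k.
Proof.
move=> w01 sum_w s01 sum_s s_int s_bal cardF.
exists #|T|, (F \o enum_val), (w \o enum_val),
  (fun i j => s (enum_val i) (enum_val j)).
split; first split.
- by move=> i; apply: w01.
- by rewrite -sum_w (big_enum_val (A := T)).
- by move=> i j p; apply: s01.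
- by move=> i j; apply: sum_s.
- by move=> i j p /s_int.
- move=> p; rewrite -(s_bal p) (big_enum_val (A := T)) /=.
  by apply: eq_bigr => t _; rewrite (big_enum_val (A := T)).
- by rewrite /cardinality -cardF (big_enum_val (A := T)).
Qed.

Lemma sum_pair_mul (I J : finType) (g : I -> I -> R) (h : J -> J -> R) :
  \sum_(t : I * J) \sum_(u : I * J) g t.1 u.1 * h t.2 u.2 =
  (\sum_i \sum_j g i j) * (\sum_q \sum_r h q r).
Proof.
rewrite -(pair_bigA _ (fun i q => \sum_(u : I * J) g i u.1 * h q u.2)).
rewrite big_distrl /=; apply: eq_bigr => i _.
under eq_bigr => q _ do rewrite -(pair_bigA _ (fun j r => g i j * h q r)) /=.
rewrite exchange_big /= big_distrl /=; apply: eq_bigr => j _.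
by rewrite big_distrr /=; apply: eq_bigr => q _; rewrite big_distrr.
Qed.

Lemma sum_delta (I : finType) (i0 : I) (g : I -> R) :
  \sum_i (i0 == i)%:R * g i = g i0.
Proof.
rewrite (bigD1 i0) //= eqxx mul1r big1 ?addr0 // => i.
by rewrite eq_sym => /negbTE ->; rewrite mul0r.
Qed.

Lemma bigmax_succ (I : finType) (i0 : I) (f : I -> nat) :
  (\max_i (f i).+1 = (\max_i f i).+1)%N.
Proof.
apply/eqP; rewrite eqn_leq; apply/andP; split.
  by apply/bigmax_leqP => i _; rewrite ltnS leq_bigmax.
rewrite (bigop.bigmax_eq_arg i0 (F := f)) //.
exact: (bigop.leq_bigmax (F := S \o f)).
Qed.

Lemma bigmax_fst (I J : finType) (j0 : J) (f : I -> nat) :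
  (\max_(t : I * J) f t.1 = \max_i f i)%N.
Proof.
apply/eqP; rewrite eqn_leq; apply/andP; split; apply/bigmax_leqP.
  by move=> t _; exact: (bigop.leq_bigmax (F := f)).
by move=> i _; exact: (bigop.leq_bigmax (F := f \o fst) (i, j0)).
Qed.

Lemma sum_eq1_ord_gt0 (m : nat) (w : 'I_m -> R) : \sum_i w i = 1 -> (0 < m)%N.
Proof.
by case: m w => // w; rewrite big_ord0 => /eqP; rewrite eq_sym oner_eq0.
Qed.

Section AddPoints.

Variables (n d m : nat) (F : 'I_m -> {set 'I_n}) (w : 'I_m -> R).
Variable s : 'I_m -> 'I_m -> 'I_n -> R.
Hypotheses (w_in01 : forall i, 0 <= w i <= 1) (sum_w : \sum_i w i = 1).
Hypotheses (s_in01 : forall i j p, 0 <= s i j p <= 1)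
  (sum_s : forall i j, \sum_p s i j p = 1).
Hypotheses (intF : is_intersecting F s) (balF : is_balanced w s).
Hypotheses (d_gt0 : (0 < d)%N) (d_small : (d * d <= n + d)%N).

Local Notation I := ('I_m * 'I_d)%type.

Definition ext_mass : R := (d * d)%:R / (n + d)%:R.
Local Notation a := ext_mass.

Definition ext_set (t : I) : {set 'I_(n + d)} :=
  rshift n t.2 |: (lshift d @: F t.1).

Definition ext_weight (t : I) : R := w t.1 / d%:R.

Definition ext_split (t u : I) (p : 'I_(n + d)) : R :=
  match split p with
  | inl p0 => s t.1 u.1 p0 * (1 - (t.2 == u.2)%:R * a)
  | inr q => a * (t.2 == q)%:R * (u.2 == q)%:R
  end.

Let d_neq0 : d%:R != 0 :> R. Proof. by rewrite pnatr_eq0 -lt0n. Qed.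

Let nd_gt0 : 0 < (n + d)%:R :> R.
Proof. by rewrite ltr0n addn_gt0 d_gt0 orbT. Qed.

Lemma ext_mass_ge0 : 0 <= a. Proof. by rewrite divr_ge0 ?ler0n. Qed.

Lemma ext_mass_le1 : a <= 1.
Proof. by rewrite ler_pdivrMr // mul1r ler_nat. Qed.

Lemma ext_split_lshift t u p :
  ext_split t u (lshift d p) = s t.1 u.1 p * (1 - (t.2 == u.2)%:R * a).
Proof. by rewrite /ext_split (unsplitK (inl _)). Qed.

Lemma ext_split_rshift t u q :
  ext_split t u (rshift n q) = a * (t.2 == q)%:R * (u.2 == q)%:R.
Proof. by rewrite /ext_split (unsplitK (inr _)). Qed.

Lemma ext_weight_in01 t : 0 <= ext_weight t <= 1.
Proof.
have /andP[w_ge0 w_le1] := w_in01 t.1.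
rewrite divr_ge0 ?ler0n //= ler_pdivrMr ?ltr0n // mul1r.
by apply: le_trans w_le1 _; rewrite ler1n.
Qed.

Lemma sum_ext_weight : \sum_t ext_weight t = 1.
Proof.
rewrite -[RHS]sum_w -(pair_bigA _ (fun i _ => w i / d%:R)) /=.
by apply: eq_bigr => i _; rewrite sumr_const card_ord -[LHS]mulr_natr divfK.
Qed.

Lemma ext_split_in01 t u p : 0 <= ext_split t u p <= 1.
Proof.
rewrite -(splitK p); case: (split p) => [p0|q] /=.
  have /andP[s_ge0 s_le1] := s_in01 t.1 u.1 p0.
  have /andP[c_ge0 c_le1] : 0 <= 1 - (t.2 == u.2)%:R * a <= 1.
    have := ext_mass_ge0; have := ext_mass_le1.
    by case: eqP => _ /=; rewrite ?mulr1n ?mulr0n; lra.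
  by rewrite ext_split_lshift mulr_ge0 ?mulr_ile1.
have := ext_mass_ge0; have := ext_mass_le1.
by rewrite ext_split_rshift; case: eqP => _; case: eqP => _ /=;
  rewrite ?mulr1n ?mulr0n; lra.
Qed.

Lemma sum_ext_split t u : \sum_p ext_split t u p = 1.
Proof.
rewrite big_split_ord /=.
under eq_bigr => p _ do rewrite ext_split_lshift.
under [X in _ + X]eq_bigr => q _ do rewrite ext_split_rshift -mulrA.
rewrite -big_distrl -big_distrr /= sum_s mul1r.
by rewrite sum_delta eq_sym; ring.
Qed.

Lemma ext_split_intersecting t u p :
  0 < ext_split t u p -> p \in ext_set t :&: ext_set u.
Proof.
rewrite -(splitK p); case: (split p) => [p0|q] /=.
  rewrite ext_split_lshift => split_gt0.
  have s_gt0 : 0 < s t.1 u.1 p0.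
    have /andP[s_ge0 _] := s_in01 t.1 u.1 p0.
    rewrite lt_def s_ge0 andbT.
    by apply: contraTneq split_gt0 => ->; rewrite mul0r ltxx.
  have /setIP[inFt inFu] := intF s_gt0.
  by rewrite inE !in_setU1 !(mem_imset _ _ (@lshift_inj _ _)) inFt inFu !orbT.
rewrite ext_split_rshift inE !in_setU1.
case: (t.2 =P q) => [<-|_] /=; last by rewrite mulr0n mulr0 mul0r ltxx.
by case: (u.2 =P t.2) => [->|_] /=; rewrite ?eqxx // mulr0n mulr0 ltxx.
Qed.

Lemma ext_split_balanced p :
  \sum_t \sum_u ext_weight t * ext_weight u * ext_split t u p = (n + d)%:R^-1.
Proof.
rewrite -(splitK p); case: (split p) => [p0|q] /=.
  have n_gt0 : (0 < n)%N by apply: leq_ltn_trans (ltn_ord p0).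
  transitivity (\sum_(t : I) \sum_(u : I) w t.1 * w u.1 * s t.1 u.1 p0 *
                  ((1 - (t.2 == u.2)%:R * a) / d%:R ^+ 2)).
    by apply: eq_bigr => t _; apply: eq_bigr => u _;
      rewrite ext_split_lshift /ext_weight; field.
  rewrite (sum_pair_mul (fun i j => w i * w j * s i j p0)
             (fun q r => (1 - (q == r)%:R * a) / d%:R ^+ 2)) balF.
  under eq_bigr => q _ do
    rewrite -big_distrl sumrB sumr_const card_ord sum_delta /=.
  rewrite sumr_const card_ord /ext_mass natrM.
  by field; rewrite -natrD (gt_eqF nd_gt0) d_neq0 pnatr_eq0 -lt0n n_gt0.
transitivity (\sum_(t : I) \sum_(u : I) w t.1 * w u.1 *
                ((q == t.2)%:R * ((q == u.2)%:R * (a / d%:R ^+ 2)))).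
  by apply: eq_bigr => t _; apply: eq_bigr => u _;
    rewrite ext_split_rshift /ext_weight ![(q == _)]eq_sym; field.
rewrite (sum_pair_mul (fun i j => w i * w j)
           (fun r r' => (q == r)%:R * ((q == r')%:R * (a / d%:R ^+ 2)))).
rewrite -big_distrlr /= sum_w mul1r.
under eq_bigr => r _ do rewrite -big_distrr /= sum_delta.
rewrite sum_delta /ext_mass natrM.
by field; rewrite -natrD (gt_eqF nd_gt0) d_neq0.
Qed.

Lemma ext_cardinality : (\max_t #|ext_set t| = (cardinality F).+1)%N.
Proof.
have card_ext t : #|ext_set t| = #|F t.1|.+1.
  rewrite cardsU1 card_imset; last exact: lshift_inj.
  suff -> : rshift n t.2 \notin lshift d @: F t.1 by [].
  by apply/imsetP => -[x _ /eqP]; rewrite eq_rlshift.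
have i0 : 'I_m := Ordinal (sum_eq1_ord_gt0 sum_w).
have j0 : 'I_d := Ordinal d_gt0.
rewrite (eq_bigr _ (fun t _ => card_ext t)) (bigmax_succ (i0, j0)).
by rewrite (bigmax_fst j0 (fun i => #|F i|)).
Qed.

End AddPoints.

Lemma achievable_addn (n d k : nat) : (0 < d)%N -> (d * d <= n + d)%N ->
  achievable n k -> achievable (n + d) k.+1.
Proof.
move=> d_gt0 d_small [m [F [w [s [[w01 sum_w s01 sum_s] intF balF <-]]]]].
apply: (achievable_finType (F := ext_set F) (w := ext_weight w)
                           (s := ext_split s)).
- exact: ext_weight_in01.
- exact: sum_ext_weight.
- exact: ext_split_in01.
- exact: sum_ext_split.
- exact: ext_split_intersecting.
- exact: ext_split_balanced.
- exact: (ext_cardinality F sum_w d_gt0).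
Qed.

Lemma kmin_achievable (n : nat) : (0 < n)%N -> achievable n (kmin n).
Proof. by case: n => // n _ /=; case: ex_minnP => k /asboolP. Qed.

Lemma kmin_min (n k : nat) : achievable n k -> (kmin n <= k)%N.
Proof.
by case: n => // n achk /=; case: ex_minnP => k0 _; apply; apply/asboolP.
Qed.

Lemma kmin_addn_le (n d : nat) : (0 < n)%N -> (d * d <= n + d)%N ->
  (kmin (n + d) <= (kmin n).+1)%N.
Proof.
move=> n_gt0; case: (posnP d) => [-> _|d_gt0 d_small]; first by rewrite addn0.
exact/kmin_min/achievable_addn/kmin_achievable.
Qed.

Lemma isqrt_sqr_le (n : nat) : (isqrt n * isqrt n <= n)%N.
Proof. by apply/ssrnat.leP/PeanoNat.Nat.sqrt_le_square. Qed.

Lemma isqrt_gt0 (n : nat) : (0 < n)%N -> (0 < isqrt n)%N.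
Proof.
by move=> n_gt0; apply/ssrnat.leP/PeanoNat.Nat.sqrt_le_square; apply/ssrnat.leP.
Qed.

Lemma leq_isqrt (m n : nat) : (m <= n)%N -> (isqrt m <= isqrt n)%N.
Proof. by move/ssrnat.leP/PeanoNat.Nat.sqrt_le_mono/ssrnat.leP. Qed.

Lemma kmin_addn_le_mul (c n d : nat) : (0 < n)%N -> (d <= c * isqrt n)%N ->
  (kmin (n + d) <= kmin n + c)%N.
Proof.
elim: c n d => [|c IHc] n d n_gt0 d_le.
  by move: d_le; rewrite mul0n leqn0 => /eqP ->; rewrite !addn0.
set e := minn d (isqrt n).
have e_sqr_le : (e * e <= n)%N.
  by apply: leq_trans (isqrt_sqr_le n); apply: leq_mul; rewrite geq_minr.
have -> : (n + d = n + e + (d - e))%N by rewrite -addnA subnKC ?geq_minl.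
apply: leq_trans (IHc _ _ _ _) _.
- by rewrite addn_gt0 n_gt0.
- apply: leq_trans (leq_mul (leqnn c) (leq_isqrt (leq_addr e n))).
  by move: d_le; rewrite mulSn /e; lia.
- rewrite addnS -addSn leq_add2r kmin_addn_le //.
  exact: leq_trans e_sqr_le (leq_addr _ _).
Qed.

Lemma leq_ceil_div (d r : nat) : (0 < r)%N -> (d <= ceil_div d r * r)%N.
Proof.
by move=> r_gt0; have := ltn_ceil (d + r.-1) r_gt0; rewrite /ceil_div; lia.
Qed.

Theorem corollary1 (n d : nat) (hn : (0 < n)%N) (hd : (0 < d)%N) :
  (kmin (n + d) <= kmin n + ceil_div d (isqrt n))%N.
Proof. by apply: kmin_addn_le_mul => //; apply/leq_ceil_div/isqrt_gt0. Qed.
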